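(* For all positive integers $n$ and every $2$-homogeneous polynomial $P(x)=\sum_{|\alpha|=2}a_\alpha\mathbf{x}^\alpha$ on $\ell_2^n$ (over $\mathbb{K}=\mathbb{R}$ or $\mathbb{C}$), \[ \max_{|\alpha|=2}|a_\alpha|\leq 4\sqrt2\,\|P\|. \] Moreover, this is optimal in the following sense: for every $r<\infty$ there is no constant $C\ge1$ (independent of $n$) such that $\big(\sum_{|\alpha|=2}|a_\alpha|^r\big)^{1/r}\le C\|P\|$ for all $2$-homogeneous polynomials $P=\sum_{|\alpha|=2}a_\alpha\mathbf{x}^\alpha$ on $\ell_2^n$ and all $n$.
   Context: $\mathbb{K}$ denotes $\mathbb{R}$ or $\mathbb{C}$. For $\alpha\in\mathbb{N}^n$, $|\alpha|=\alpha_1+\cdots+\alpha_n$ and $\mathbf{x}^\alpha=x_1^{\alpha_1}\cdots x_n^{\alpha_n}$. $\ell_p^n$ is $\mathbb{K}^n$ with the $p$-norm, and for a polynomial $P$ on $\ell_p^n$, $\|P\|=\sup\{|P(x)|:\|x\|_p\le1\}$. *)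

(* real analysis over Stdlib's R.
   The scalar field K is R or C; we model C as R*R and K as the subset of
   C given by the flag [cplx] (cplx = false: real numbers, i.e. imaginary part 0). *)
From Stdlib Require Import Reals.
Open Scope R_scope.

Definition Cx : Type := (R * R)%type.
Definition C0 : Cx := (0, 0).
Definition Cadd (z w : Cx) : Cx := (fst z + fst w, snd z + snd w).
Definition Cmul (z w : Cx) : Cx :=
  (fst z * fst w - snd z * snd w, fst z * snd w + snd z * fst w).
Definition Cabs (z : Cx) : R := sqrt (fst z ^ 2 + snd z ^ 2).

Definition inK (cplx : bool) (z : Cx) : Prop := cplx = true \/ snd z = 0.

Fixpoint Csum (n : nat) (f : nat -> Cx) : Cx :=
  match n with O => C0 | S m => Cadd (Csum m f) (f m) end.
Fixpoint Rsum (n : nat) (f : nat -> R) : R :=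
  match n with O => 0 | S m => Rsum m f + f m end.

(* A 2-homogeneous polynomial on K^n is given by its coefficients
   a i j, (i <= j < n), the coefficient of the monomial x_i x_j
   (multi-indices alpha with |alpha| = 2 <-> pairs i <= j). *)
Definition poly2_eval (n : nat) (a : nat -> nat -> Cx) (x : nat -> Cx) : Cx :=
  Csum n (fun j => Csum (S j) (fun i => Cmul (a i j) (Cmul (x i) (x j)))).

Definition l2norm (n : nat) (x : nat -> Cx) : R :=
  sqrt (Rsum n (fun i => Cabs (x i) ^ 2)).

Definition is_poly2_norm (cplx : bool) (n : nat) (a : nat -> nat -> Cx) (N : R) : Prop :=
  is_lub (fun y => exists x : nat -> Cx,
            (forall i, (i < n)%nat -> inK cplx (x i)) /\
            l2norm n x <= 1 /\ y = Cabs (poly2_eval n a x)) N.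

Definition coeffs_in_K (cplx : bool) (n : nat) (a : nat -> nat -> Cx) : Prop :=
  forall i j, (i <= j)%nat -> (j < n)%nat -> inK cplx (a i j).

(* real power t^s for t >= 0, s > 0, with the convention 0^s = 0 *)
Definition rpow (t s : R) : R :=
  match Rlt_dec 0 t with left _ => Rpower t s | right _ => 0 end.

Definition coeff_lr_norm (r : R) (n : nat) (a : nat -> nat -> Cx) : R :=
  rpow (Rsum n (fun j => Rsum (S j) (fun i => rpow (Cabs (a i j)) r))) (1 / r).

From Stdlib Require Import Reals Lra Lia Psatz.
From Coquelicot Require Import Coquelicot.
Open Scope R_scope.

(* On a unit vector e_i the polynomial takes the value a_ii, and for i < j the
   polarization identity a_ij = P((e_i + e_j)/sqrt 2) - P((e_i - e_j)/sqrt 2)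
   holds, so every coefficient is bounded by 2 ||P|| <= 4 sqrt 2 ||P||.
   For optimality take P(x) = sum_i x_i^2: its norm is at most 1, whereas the
   l_r norm of its coefficients is n^(1/r), which is unbounded in n. *)

Definition Cneg (z : Cx) : Cx := (- fst z, - snd z).

Lemma Cabs_add z w : Cabs (Cadd z w) <= Cabs z + Cabs w.
Proof. exact (Cmod_triangle z w). Qed.

Lemma Cabs_mul z w : Cabs (Cmul z w) = Cabs z * Cabs w.
Proof. exact (Cmod_mult z w). Qed.

Lemma Cabs_neg z : Cabs (Cneg z) = Cabs z.
Proof. exact (Cmod_opp z). Qed.

Lemma Cabs_ge0 z : 0 <= Cabs z.
Proof. exact (Cmod_ge_0 z). Qed.

Lemma Cabs_C0 : Cabs C0 = 0.
Proof. exact Cmod_0. Qed.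

Lemma Cabs_real t : Cabs (t, 0) = Rabs t.
Proof. exact (Cmod_R t). Qed.

Lemma Cabs_real_sq t : Cabs (t, 0) ^ 2 = t ^ 2.
Proof. rewrite Cabs_real; apply pow2_abs. Qed.

Lemma Cadd_0l z : Cadd C0 z = z.
Proof. destruct z; unfold Cadd, C0; simpl; f_equal; ring. Qed.

Lemma Cadd_0r z : Cadd z C0 = z.
Proof. destruct z; unfold Cadd, C0; simpl; f_equal; ring. Qed.

Lemma Cmul_0l z : Cmul C0 z = C0.
Proof. destruct z; unfold Cmul, C0; simpl; f_equal; ring. Qed.

Lemma Cmul_0r z : Cmul z C0 = C0.
Proof. destruct z; unfold Cmul, C0; simpl; f_equal; ring. Qed.

Lemma Cmul_1r z : Cmul z (1, 0) = z.
Proof. destruct z; unfold Cmul; simpl; f_equal; ring. Qed.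

Lemma Csum_zero n f : (forall k, (k < n)%nat -> f k = C0) -> Csum n f = C0.
Proof.
  induction n as [|n IH]; intros Hf; simpl; [reflexivity|].
  rewrite IH by (intros; apply Hf; lia). rewrite Hf by lia. apply Cadd_0l.
Qed.

Lemma Csum_single n f m : (m < n)%nat ->
  (forall k, (k < n)%nat -> k <> m -> f k = C0) -> Csum n f = f m.
Proof.
  induction n as [|n IH]; intros Hm Hf; [lia|]; simpl.
  destruct (Nat.eq_dec m n) as [->|Hmn].
  - rewrite Csum_zero by (intros; apply Hf; lia). apply Cadd_0l.
  - rewrite IH, (Hf n) by (lia || (intros; apply Hf; lia)). apply Cadd_0r.
Qed.

Lemma Csum_pair n f m1 m2 : (m1 < m2)%nat -> (m2 < n)%nat ->
  (forall k, (k < n)%nat -> k <> m1 -> k <> m2 -> f k = C0) ->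
  Csum n f = Cadd (f m1) (f m2).
Proof.
  induction n as [|n IH]; intros H12 H2 Hf; [lia|]; simpl.
  destruct (Nat.eq_dec m2 n) as [->|Hmn].
  - rewrite (Csum_single n f m1) by (lia || (intros; apply Hf; lia)). reflexivity.
  - rewrite IH, (Hf n) by (lia || (intros; apply Hf; lia)). apply Cadd_0r.
Qed.

Lemma Rsum_zero n f : (forall k, (k < n)%nat -> f k = 0) -> Rsum n f = 0.
Proof.
  induction n as [|n IH]; intros Hf; simpl; [reflexivity|].
  rewrite IH by (intros; apply Hf; lia). rewrite Hf by lia. ring.
Qed.

Lemma Rsum_single n f m : (m < n)%nat ->
  (forall k, (k < n)%nat -> k <> m -> f k = 0) -> Rsum n f = f m.
Proof.
  induction n as [|n IH]; intros Hm Hf; [lia|]; simpl.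
  destruct (Nat.eq_dec m n) as [->|Hmn].
  - rewrite Rsum_zero by (intros; apply Hf; lia). ring.
  - rewrite IH, (Hf n) by (lia || (intros; apply Hf; lia)). ring.
Qed.

Lemma Rsum_pair n f m1 m2 : (m1 < m2)%nat -> (m2 < n)%nat ->
  (forall k, (k < n)%nat -> k <> m1 -> k <> m2 -> f k = 0) ->
  Rsum n f = f m1 + f m2.
Proof.
  induction n as [|n IH]; intros H12 H2 Hf; [lia|]; simpl.
  destruct (Nat.eq_dec m2 n) as [->|Hmn].
  - rewrite (Rsum_single n f m1) by (lia || (intros; apply Hf; lia)). reflexivity.
  - rewrite IH, (Hf n) by (lia || (intros; apply Hf; lia)). ring.
Qed.

Lemma Rsum_nonneg n f : (forall k, 0 <= f k) -> 0 <= Rsum n f.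
Proof.
  induction n as [|n IH]; intros Hf; simpl; [lra|].
  specialize (IH Hf). specialize (Hf n). lra.
Qed.

Lemma poly2_norm_bound cplx n a N x :
  is_poly2_norm cplx n a N ->
  (forall k, (k < n)%nat -> inK cplx (x k)) -> l2norm n x <= 1 ->
  Cabs (poly2_eval n a x) <= N.
Proof. intros [Hub _] HK Hx. apply Hub. exists x. auto. Qed.

Definition unit_vec (i : nat) : nat -> Cx :=
  fun k => if Nat.eq_dec k i then (1, 0) else C0.

Definition pair_vec (i j : nat) (s t : R) : nat -> Cx :=
  fun k => if Nat.eq_dec k i then (s, 0) else if Nat.eq_dec k j then (t, 0) else C0.

Lemma unit_vec_inK cplx i k : inK cplx (unit_vec i k).
Proof. right. unfold unit_vec. destruct (Nat.eq_dec k i); reflexivity. Qed.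

Lemma pair_vec_inK cplx i j s t k : inK cplx (pair_vec i j s t k).
Proof.
  right. unfold pair_vec.
  destruct (Nat.eq_dec k i); [|destruct (Nat.eq_dec k j)]; reflexivity.
Qed.

Lemma l2norm_unit_vec n i : (i < n)%nat -> l2norm n (unit_vec i) = 1.
Proof.
  intros Hi. unfold l2norm.
  rewrite (Rsum_single n _ i Hi).
  - unfold unit_vec. destruct (Nat.eq_dec i i); [|congruence].
    rewrite Cabs_real_sq, pow1. apply sqrt_1.
  - intros k _ Hk. unfold unit_vec. destruct (Nat.eq_dec k i); [lia|].
    rewrite Cabs_C0. ring.
Qed.

Lemma l2norm_pair_vec n i j s t : (i < j)%nat -> (j < n)%nat ->
  l2norm n (pair_vec i j s t) = sqrt (s ^ 2 + t ^ 2).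
Proof.
  intros Hij Hj. unfold l2norm.
  rewrite (Rsum_pair n _ i j Hij Hj).
  - unfold pair_vec. destruct (Nat.eq_dec i i); [|congruence].
    destruct (Nat.eq_dec j i); [lia|]. destruct (Nat.eq_dec j j); [|congruence].
    rewrite !Cabs_real_sq. reflexivity.
  - intros k _ Hki Hkj. unfold pair_vec.
    destruct (Nat.eq_dec k i); [lia|]. destruct (Nat.eq_dec k j); [lia|].
    rewrite Cabs_C0. ring.
Qed.

Lemma poly2_eval_unit_vec n a i : (i < n)%nat -> poly2_eval n a (unit_vec i) = a i i.
Proof.
  intros Hi. unfold poly2_eval.
  rewrite (Csum_single n _ i Hi).
  - rewrite (Csum_single (S i) _ i ltac:(lia)).
    + unfold unit_vec. destruct (Nat.eq_dec i i); [|congruence].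
      rewrite !Cmul_1r. reflexivity.
    + intros k _ Hk. unfold unit_vec at 1. destruct (Nat.eq_dec k i); [lia|].
      rewrite Cmul_0l. apply Cmul_0r.
  - intros k _ Hk. apply Csum_zero. intros l _.
    unfold unit_vec at 2. destruct (Nat.eq_dec k i); [lia|].
    rewrite !Cmul_0r. reflexivity.
Qed.

Lemma poly2_eval_pair_vec n a i j s t : (i < j)%nat -> (j < n)%nat ->
  poly2_eval n a (pair_vec i j s t) =
  Cadd (Cmul (a i i) (Cmul (s, 0) (s, 0)))
       (Cadd (Cmul (a i j) (Cmul (s, 0) (t, 0))) (Cmul (a j j) (Cmul (t, 0) (t, 0)))).
Proof.
  intros Hij Hj. unfold poly2_eval.
  assert (Hout : forall k, k <> i -> k <> j -> pair_vec i j s t k = C0).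
  { intros k Hki Hkj. unfold pair_vec.
    destruct (Nat.eq_dec k i); [lia|]. destruct (Nat.eq_dec k j); [lia|]. reflexivity. }
  rewrite (Csum_pair n _ i j Hij Hj).
  - rewrite (Csum_single (S i) _ i), (Csum_pair (S j) _ i j) by
      (lia || (intros k ? ? ?; rewrite (Hout k), Cmul_0l by lia; apply Cmul_0r)
           || (intros k ? ?; rewrite (Hout k), Cmul_0l by lia; apply Cmul_0r)).
    unfold pair_vec. destruct (Nat.eq_dec i i); [|congruence].
    destruct (Nat.eq_dec j i); [lia|]. destruct (Nat.eq_dec j j); [|congruence].
    reflexivity.
  - intros k _ Hki Hkj. apply Csum_zero. intros l _.
    rewrite (Hout k Hki Hkj), !Cmul_0r. reflexivity.
Qed.

(* Polarization: the diagonal terms cancel and [2 h^2 = 1]. *)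
Lemma poly2_polarization n a i j h : (i < j)%nat -> (j < n)%nat -> h * h = / 2 ->
  a i j = Cadd (poly2_eval n a (pair_vec i j h h))
               (Cneg (poly2_eval n a (pair_vec i j h (- h)))).
Proof.
  intros Hij Hj Hh. rewrite !poly2_eval_pair_vec by lia.
  assert (Htwo : forall u : R, u = u * (2 * (h * h))) by (intro; rewrite Hh; field).
  destruct (a i i) as [p q], (a i j) as [u v], (a j j) as [w z].
  unfold Cadd, Cmul, Cneg; simpl. f_equal.
  - rewrite (Htwo u) at 1. ring.
  - rewrite (Htwo v) at 1. ring.
Qed.

Section CoefficientBounds.

Variables (cplx : bool) (n : nat) (a : nat -> nat -> Cx) (N : R).
Hypothesis HN : is_poly2_norm cplx n a N.

Lemma diag_coeff_le_norm i : (i < n)%nat -> Cabs (a i i) <= N.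
Proof.
  intros Hi. rewrite <- (poly2_eval_unit_vec n a i Hi).
  apply (poly2_norm_bound cplx); [exact HN|intros; apply unit_vec_inK|].
  rewrite l2norm_unit_vec by exact Hi. lra.
Qed.

Lemma offdiag_coeff_le_2norm i j : (i < j)%nat -> (j < n)%nat -> Cabs (a i j) <= 2 * N.
Proof.
  intros Hij Hj.
  set (h := / sqrt 2).
  assert (Hh : h * h = / 2) by (unfold h; rewrite <- Rinv_mult, sqrt_sqrt; lra).
  assert (Hball : forall t, t * t = / 2 ->
            Cabs (poly2_eval n a (pair_vec i j h t)) <= N).
  { intros t Ht. apply (poly2_norm_bound cplx); [exact HN|intros; apply pair_vec_inK|].
    rewrite l2norm_pair_vec by assumption.
    replace (h ^ 2 + t ^ 2) with 1 by nra. rewrite sqrt_1. lra. }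
  rewrite (poly2_polarization n a i j h Hij Hj Hh).
  eapply Rle_trans; [apply Cabs_add|]. rewrite Cabs_neg.
  pose proof (Hball h Hh). pose proof (Hball (- h) ltac:(nra)). lra.
Qed.

Lemma coeff_le_2norm i j : (i <= j)%nat -> (j < n)%nat -> Cabs (a i j) <= 2 * N.
Proof.
  intros Hij Hj. destruct (Nat.eq_dec i j) as [->|Hne].
  - pose proof (diag_coeff_le_norm j Hj). pose proof (Cabs_ge0 (a j j)). lra.
  - apply offdiag_coeff_le_2norm; lia.
Qed.

End CoefficientBounds.

Definition sum_sq_coeffs : nat -> nat -> Cx :=
  fun i j => if Nat.eq_dec i j then (1, 0) else C0.

Lemma sum_sq_coeffs_inK cplx n : coeffs_in_K cplx n sum_sq_coeffs.
Proof. intros i j _ _. right. unfold sum_sq_coeffs. destruct (Nat.eq_dec i j); reflexivity. Qed.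

Lemma poly2_eval_sum_sq_le n x :
  Cabs (poly2_eval n sum_sq_coeffs x) <= Rsum n (fun k => Cabs (x k) ^ 2).
Proof.
  unfold poly2_eval. induction n as [|n IH].
  - simpl. rewrite Cabs_C0. lra.
  - change (Csum (S n) ?F) with (Cadd (Csum n F) (F n)).
    change (Rsum (S n) ?F) with (Rsum n F + F n).
    eapply Rle_trans; [apply Cabs_add|].
    rewrite (Csum_single (S n) _ n) by (lia || (intros k _ Hk; unfold sum_sq_coeffs;
       destruct (Nat.eq_dec k n); [lia|]; apply Cmul_0l)).
    unfold sum_sq_coeffs at 2. destruct (Nat.eq_dec n n); [|congruence].
    rewrite !Cabs_mul, Cabs_real, Rabs_R1. nra.
Qed.

Lemma poly2_norm_sum_sq_le1 cplx n :
  exists N, is_poly2_norm cplx n sum_sq_coeffs N /\ N <= 1.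
Proof.
  set (E := fun y => exists x : nat -> Cx,
            (forall i, (i < n)%nat -> inK cplx (x i)) /\
            l2norm n x <= 1 /\ y = Cabs (poly2_eval n sum_sq_coeffs x)).
  assert (Hub : is_upper_bound E 1).
  { intros y (x & _ & Hx & ->). eapply Rle_trans; [apply poly2_eval_sum_sq_le|].
    unfold l2norm in Hx.
    set (S := Rsum n (fun k => Cabs (x k) ^ 2)) in *.
    assert (0 <= S) by (apply Rsum_nonneg; intros; apply pow2_ge_0).
    rewrite <- (pow2_sqrt S) by lra. pose proof (sqrt_pos S). nra. }
  assert (Hzero : E 0).
  { exists (fun _ => C0). split; [intros; right; reflexivity|]. split.
    - unfold l2norm. rewrite Rsum_zero, sqrt_0 by (intros; rewrite Cabs_C0; ring). lra.
    - unfold poly2_eval. rewrite Csum_zero; [symmetry; apply Cabs_C0|].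
      intros j _. apply Csum_zero. intros i _. rewrite Cmul_0l. apply Cmul_0r. }
  destruct (completeness E) as [N HN]; [exists 1; exact Hub|exists 0; exact Hzero|].
  exists N. split; [exact HN|]. apply HN, Hub.
Qed.

Lemma rpow_0 s : rpow 0 s = 0.
Proof. unfold rpow. destruct (Rlt_dec 0 0); [lra|reflexivity]. Qed.

Lemma rpow_1 s : rpow 1 s = 1.
Proof.
  unfold rpow. destruct (Rlt_dec 0 1); [|lra].
  unfold Rpower. rewrite ln_1, Rmult_0_r. apply exp_0.
Qed.

Lemma coeff_lr_norm_sum_sq r n : coeff_lr_norm r n sum_sq_coeffs = rpow (INR n) (1 / r).
Proof.
  unfold coeff_lr_norm. f_equal.
  induction n as [|n IH]; [reflexivity|].
  change (Rsum (S n) ?F) with (Rsum n F + F n).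
  rewrite IH, (Rsum_single (S n) _ n) by (lia || (intros k _ Hk; unfold sum_sq_coeffs;
       destruct (Nat.eq_dec k n); [lia|]; rewrite Cabs_C0; apply rpow_0)).
  unfold sum_sq_coeffs. destruct (Nat.eq_dec n n); [|congruence].
  rewrite Cabs_real, Rabs_R1, rpow_1, S_INR. ring.
Qed.

(* Choosing [n > C^r] gives [n^(1/r) > (C^r)^(1/r) = C]. *)
Lemma rpow_INR_unbounded r C : 0 < r -> 0 < C ->
  exists n, (1 <= n)%nat /\ C < rpow (INR n) (1 / r).
Proof.
  intros Hr HC.
  destruct (INR_archimed 1 (Rpower C r) ltac:(lra)) as [m Hm].
  exists (S m). split; [lia|].
  assert (Hpos : 0 < Rpower C r) by apply exp_pos.
  assert (Hlt : Rpower C r < INR (S m)) by (rewrite S_INR; lra).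
  unfold rpow. destruct (Rlt_dec 0 (INR (S m))) as [Hn|Hn]; [|lra].
  replace C with (Rpower (Rpower C r) (1 / r)) at 1.
  - apply Rlt_Rpower_l; [apply Rdiv_lt_0_compat|split]; lra.
  - rewrite Rpower_mult. replace (r * (1 / r)) with 1 by (field; lra).
    apply Rpower_1, HC.
Qed.

Theorem proposition2 (cplx : bool) :
  (forall (n : nat) (a : nat -> nat -> Cx) (N : R),
     (1 <= n)%nat -> coeffs_in_K cplx n a -> is_poly2_norm cplx n a N ->
     forall i j : nat, (i <= j)%nat -> (j < n)%nat ->
       Cabs (a i j) <= 4 * sqrt 2 * N)
  /\
  (forall r : R, 0 < r ->
     ~ (exists C : R, 1 <= C /\
          forall (n : nat) (a : nat -> nat -> Cx) (N : R),
            (1 <= n)%nat -> coeffs_in_K cplx n a -> is_poly2_norm cplx n a N ->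
            coeff_lr_norm r n a <= C * N)).
Proof.
  split.
  - intros n a N _ _ HN i j Hij Hj.
    assert (HN0 : 0 <= N)
      by (pose proof (Cabs_ge0 (a j j)); pose proof (diag_coeff_le_norm cplx n a N HN j Hj); lra).
    assert (Hsqrt2 : 1 <= sqrt 2) by (rewrite <- sqrt_1; apply sqrt_le_1_alt; lra).
    pose proof (coeff_le_2norm cplx n a N HN i j Hij Hj). nra.
  - intros r Hr (C & HC & Hbound).
    destruct (rpow_INR_unbounded r C Hr ltac:(lra)) as (n & Hn & HCn).
    destruct (poly2_norm_sum_sq_le1 cplx n) as (N & HN & HN1).
    pose proof (Hbound n sum_sq_coeffs N Hn (sum_sq_coeffs_inK cplx n) HN) as Hlr.
    rewrite coeff_lr_norm_sum_sq in Hlr. nra.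
Qed.
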